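(* Let $(X,\mu)$ be a probability measure space, $0<q<1$, $w:X\to[0,\infty)$ measurable, and for each $n\in\mathbb{N}$ let $X_n\subseteq X$ be measurable and $w_n:X_n\to\mathbb{R}^+$ measurable with $w_n\ge w$ on $X_n$. Suppose $\lim_n\int_{X_n}w_n^q\,d\mu$ and $\lim_n\int_{X_n}w^q\,d\mu$ exist as real numbers and are equal. Then $\lim_n\int_{X_n}(w_n-w)^q\,d\mu=0$. *)

From HB Require Import structures.
From mathcomp Require Import all_boot all_order all_algebra.
From mathcomp Require Import all_classical all_reals all_analysis.

From HB Require Import structures.
From mathcomp Require Import all_boot all_order all_algebra.
From mathcomp Require Import all_classical all_reals all_analysis.
From mathcomp Require Import lra ring measurable_realfun.
Import Order.TTheory GRing.Theory Num.Theory.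
Import numFieldNormedType.Exports.
Local Open Scope classical_set_scope.
Local Open Scope ring_scope.

(* For 0 <= b <= a and eps > 0 there is C with
   (a - b)^q <= eps b^q + C (a^q - b^q): writing eps = s^q, if a <= (1 + s) b
   the left side is at most (s b)^q, and otherwise b^q <= a^q / (1 + s)^q, so
   the increment a^q - b^q is a fixed fraction of a^q >= (a - b)^q.
   Integrating over X_n with a = w_n and b = w bounds the integral of
   (w_n - w)^q by eps times that of w^q plus C times the difference of the
   integrals of w_n^q and w^q; the limit superior is then at most eps L, and
   eps is arbitrary. *)

Lemma powR_subr_le (R : realType) (q eps : R) : 0 < q -> 0 < eps ->
  exists2 C : R, 0 <= C & forall a b : R, 0 <= b -> b <= a ->
    (a - b) `^ q <= eps * b `^ q + C * (a `^ q - b `^ q).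
Proof.
move=> q0 eps0; set s := eps `^ q^-1.
have s0 : 0 < s by rewrite powR_gt0.
have sq : s `^ q = eps by rewrite -powRrM mulVf ?gt_eqF // powRr1 // ltW.
set k := (1 + s) `^ q.
have k1 : 1 < k.
  have one_powR : 1 `^ q = 1 :> R by rewrite powR1.
  by rewrite -[X in X < k]one_powR gt0_ltr_powR // ?nnegrE ?ltrDl // addr_ge0 // ltW.
have k10 : 0 < k - 1 by rewrite subr_gt0.
exists (k / (k - 1)); first by rewrite divr_ge0 // ltW // (lt_trans ltr01).
move=> a b b0 ba.
have mono x y : 0 <= x -> x <= y -> x `^ q <= y `^ q.
  by move=> x0 xy; rewrite ge0_ler_powR ?nnegrE ?(ltW q0) // (le_trans x0).
have Bq_le_Aq : b `^ q <= a `^ q by exact: mono.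
have Bq0 := powR_ge0 b q.
case: (leP a ((1 + s) * b)) => [a_le|a_gt].
  have : (a - b) `^ q <= eps * b `^ q.
    rewrite -sq -powRM ?(ltW s0) // mono ?subr_ge0 //.
    by rewrite lerBlDl (le_trans a_le) // mulrDl mul1r addrC.
  have : 0 <= k / (k - 1) * (a `^ q - b `^ q).
    by rewrite mulr_ge0 ?subr_ge0 // divr_ge0 // ltW // (lt_trans ltr01).
  lra.
have ABq_le_Aq : (a - b) `^ q <= a `^ q by rewrite mono ?subr_ge0 // lerBlDr lerDl.
have kb_le : k * b `^ q <= a `^ q.
  by rewrite /k -powRM ?addr_ge0 ?(ltW s0) // mono ?mulr_ge0 ?addr_ge0 ?(ltW s0) // ltW.
have : 0 <= (a `^ q - k * b `^ q) / (k - 1) by rewrite divr_ge0 ?subr_ge0 // ltW.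
have -> : (a `^ q - k * b `^ q) / (k - 1) = k / (k - 1) * (a `^ q - b `^ q) - a `^ q.
  by field; rewrite gt_eqF.
have : 0 <= eps * b `^ q by rewrite mulr_ge0 // ltW.
lra.
Qed.

Local Open Scope ereal_scope.

Lemma ge0_le_integral_lincomb d (X : measurableType d) (R : realType)
  (mu : {measure set X -> \bar R}) (D : set X) (f g h : X -> R) (c e : R) :
  measurable D -> (0 <= c)%R -> (0 <= e)%R ->
  measurable_fun D f -> measurable_fun D g -> measurable_fun D h ->
  (forall x, D x -> [/\ 0 <= f x, 0 <= g x & 0 <= h x]%R) ->
  (forall x, D x -> f x + c * g x <= e * g x + c * h x)%R ->
  \int[mu]_(x in D) (f x)%:E + c%:E * \int[mu]_(x in D) (g x)%:E
    <= e%:E * \int[mu]_(x in D) (g x)%:E + c%:E * \int[mu]_(x in D) (h x)%:E.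
Proof.
move=> mD c0 e0 mf mg mh fgh0 fgh_le.
move/measurable_EFinP in mf; move/measurable_EFinP in mg; move/measurable_EFinP in mh.
have [f0 g0 h0] : [/\ forall x, D x -> 0 <= (f x)%:E, forall x, D x -> 0 <= (g x)%:E
    & forall x, D x -> 0 <= (h x)%:E].
  by split=> x Dx; have [] := fgh0 x Dx; rewrite lee_fin.
have Z0 (k : R) (u : X -> R) : (0 <= k)%R -> (forall x, D x -> 0 <= (u x)%:E) ->
    forall x, D x -> 0 <= k%:E * (u x)%:E.
  by move=> k0 u0 x Dx; apply: mule_ge0; [rewrite lee_fin | exact: u0].
rewrite -!ge0_integralZl_EFin // -!ge0_integralD //; try exact: Z0;
  try exact: measurable_funeM.
apply: ge0_le_integral; first exact: mD.
- by move=> x Dx; apply: adde_ge0; [exact: f0 | exact: Z0].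
- by apply: emeasurable_funD => //; exact: measurable_funeM.
- by apply: emeasurable_funD; exact: measurable_funeM.
- by move=> x Dx; rewrite -!EFinM -!EFinD lee_fin fgh_le.
Qed.

Lemma integral_powR_subr_le d (X : measurableType d) (R : realType)
  (mu : {measure set X -> \bar R}) (D : set X) (q eps C : R) (v w : X -> R) :
  (0 <= eps)%R -> (0 <= C)%R ->
  (forall a b : R, 0 <= b -> b <= a ->
     (a - b) `^ q <= eps * b `^ q + C * (a `^ q - b `^ q))%R ->
  measurable D -> measurable_fun D w -> measurable_fun D v ->
  (forall x, D x -> 0 <= w x)%R -> (forall x, D x -> w x <= v x)%R ->
  \int[mu]_(x in D) ((v x - w x) `^ q)%:E + C%:E * \int[mu]_(x in D) ((w x) `^ q)%:E
    <= eps%:E * \int[mu]_(x in D) ((w x) `^ q)%:E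
       + C%:E * \int[mu]_(x in D) ((v x) `^ q)%:E.
Proof.
move=> eps0 C0 powR_le mD mw mv w0 wv.
have mpowR (f : X -> R) : measurable_fun D f -> measurable_fun D (fun x => f x `^ q)%R.
  exact: measurableT_comp (measurable_powR _).
apply: ge0_le_integral_lincomb => //; try exact: mpowR.
- exact/mpowR/measurable_funB.
- by move=> x _; rewrite !powR_ge0.
- move=> x Dx; have := powR_le _ _ (w0 x Dx) (wv x Dx); lra.
Qed.

Lemma ge0_fine_le_lincomb (R : realType) (U : \bar R) (a b c e : R) : 0 <= U ->
  U + c%:E * a%:E <= e%:E * a%:E + c%:E * b%:E ->
  U \is a fin_num /\ (fine U <= e * a + c * (b - a))%R.
Proof.
rewrite -!EFinM -EFinD; case: U => [r| |] //= _.
by rewrite -EFinD lee_fin => h; split => //; lra.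
Qed.

Local Close Scope ereal_scope.

Lemma cvg_to0_squeeze_envelope {R : realType} {u a b : nat -> R} {L : R} :
  (forall n, 0 <= u n) -> a @ \oo --> L -> b @ \oo --> L ->
  (forall eps, 0 < eps -> exists C : R,
     \forall n \near \oo, u n <= eps * a n + C * (b n - a n)) ->
  u @ \oo --> 0.
Proof.
move=> u0 aL bL envelope; apply/cvgr0Pnorm_lt => e e0.
have L1_gt0 : 0 < `|L| + 1 by rewrite ltr_wpDl.
set eps := e / (`|L| + 1).
have [C uC] := envelope eps (divr_gt0 e0 L1_gt0).
have env_cvg : (fun n => eps * a n + C * (b n - a n)) @ \oo --> eps * L.
  rewrite -[X in _ --> X]addr0 -(mulr0 C) -(subrr L).
  by apply: cvgD; apply: cvgM; [exact: cvg_cst | exact: aL | exact: cvg_cst | exact: cvgB].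
have epsL_lt : eps * L < e.
  rewrite (le_lt_trans (ler_wpM2l _ (ler_norm L))) ?divr_ge0 ?ltW //.
  by rewrite /eps mulrAC ltr_pdivrMr // ltr_pM2l // ltrDl.
near=> n.
rewrite ger0_norm // (le_lt_trans (_ : u n <= eps * a n + C * (b n - a n))) //.
  by near: n; exact: uC.
by near: n; exact: cvgr_lt env_cvg _ epsL_lt.
Unshelve. all: end_near.
Qed.

Theorem lemma5p2 (d : measure_display) (X : measurableType d) (R : realType)
  (mu : probability X R) (q : R) (w : X -> R)
  (Xn : nat -> set X) (wn : nat -> X -> R) :
  0 < q -> q < 1 ->
  measurable_fun setT w -> (forall x, 0 <= w x) ->
  (forall n, measurable (Xn n)) ->
  (forall n, measurable_fun (Xn n) (wn n)) ->
  (forall n x, Xn n x -> 0 < wn n x) ->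
  (forall n x, Xn n x -> w x <= wn n x) ->
  (exists L : R,
     (fun n => (\int[mu]_(x in Xn n) ((wn n x) `^ q)%:E)%E) @ \oo --> L%:E /\
     (fun n => (\int[mu]_(x in Xn n) ((w x) `^ q)%:E)%E) @ \oo --> L%:E) ->
  (fun n => (\int[mu]_(x in Xn n) ((wn n x - w x) `^ q)%:E)%E) @ \oo --> 0%E.
Proof.
move=> q0 _ mw w0 mXn mwn _ w_le [L [cvgB cvgA]].
set u := fun n => (\int[mu]_(x in Xn n) ((wn n x - w x) `^ q)%:E)%E.
set A := fun n => (\int[mu]_(x in Xn n) ((w x) `^ q)%:E)%E in cvgA *.
set B := fun n => (\int[mu]_(x in Xn n) ((wn n x) `^ q)%:E)%E in cvgB *.
have u0 n : (0 <= u n)%E by apply: integral_ge0 => x _; rewrite lee_fin powR_ge0.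
have envelope eps : 0 < eps -> exists C, forall n,
    A n \is a fin_num -> B n \is a fin_num ->
    u n \is a fin_num /\ fine (u n) <= eps * fine (A n) + C * (fine (B n) - fine (A n)).
  move=> eps0; have [C C0 powR_le] := @powR_subr_le _ q eps q0 eps0.
  exists C => n fA fB; apply: ge0_fine_le_lincomb; first exact: u0.
  rewrite !fineK //; apply: integral_powR_subr_le => //; first exact: ltW.
    exact: measurable_funS (subsetT _) mw.
  exact: w_le.
move/fine_cvgP: cvgA => [finA cvgA]; move/fine_cvgP: cvgB => [finB cvgB].
have finAB : \forall n \near \oo, A n \is a fin_num /\ B n \is a fin_num.
  exact/near_andP.
suff : u @ \oo --> 0%:E by [].
apply/fine_cvgP; split.
  have [C1 envelope1] := envelope 1 ltr01.
  by apply: filterS finAB => n [fA fB]; case: (envelope1 n fA fB).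
apply: (cvg_to0_squeeze_envelope (u := fine \o u) _ cvgA cvgB) => [n | eps eps0].
  exact: fine_ge0 (u0 n).
have [C envelopeC] := envelope eps eps0; exists C.
by apply: filterS finAB => n [fA fB]; case: (envelopeC n fA fB).
Qed.
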